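(* Let $\mathcal{A}$ be a deterministic adaptive algorithm that is $(\alpha,\beta)$-instance optimal on graphs with $n$ vertices for parameter $k$. Then $\alpha^2\beta=\Omega(n/k)$.
   Context: Graphs are undirected with known edge weights and unique shortest paths; edges have distinct capacities unknown to the algorithm. For vertices $s,t$, $P(s,t)$ is the unique shortest path; an edge on $P(s,t)$ is a bottleneck edge of $P(s,t)$ if its capacity is strictly smaller than that of every other edge of $P(s,t)$. Selecting $s$ as a vantage point reveals the bottleneck edge of $P(s,t)$ and its capacity for every $t\neq s$; a set of vantage points reveals the union. An adaptive algorithm selects vantage points one at a time, learning the edges revealed by each selection before choosing the next. For an instance $I=(G,c)$, $OPT(I)$ is the maximum number of edges revealed by any set of $k$ vertices. An algorithm is $(\alpha,\beta)$-instance optimal ($\alpha,\beta\ge1$) if on every instance $I$ it selects at most $\alpha k$ vantage points and reveals at least $OPT(I)/\beta$ edges. *)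

From HB Require Import structures.
From mathcomp Require Import all_boot all_order all_algebra.
From mathcomp Require Import boolp reals.
Set Implicit Arguments. Unset Strict Implicit. Unset Printing Implicit Defensive.
Import Order.TTheory GRing.Theory Num.Theory.
Local Open Scope ring_scope.

Section Vantage.
Variables (R : realType) (n : nat).

(* Vertices are 'I_n; an (undirected) edge is a 2-element vertex set. *)
Definition vertex := 'I_n.
Definition edge := {set 'I_n}.
Definition graph := {set edge}.

Definition adj (G : graph) (u v : 'I_n) : bool := [set u; v] \in G.

Definition walk (G : graph) (s t : 'I_n) (p : seq 'I_n) : bool :=
  path (adj G) s p && (last s p == t).

Definition pedges (s : 'I_n) (p : seq 'I_n) : seq edge :=
  [seq [set x.1; x.2] | x <- zip (s :: p) p].

Definition pweight (w : edge -> R) (s : 'I_n) (p : seq 'I_n) : R :=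
  \sum_(e <- pedges s p) w e.

Definition shortest (G : graph) (w : edge -> R) (s t : 'I_n) (p : seq 'I_n) : Prop :=
  walk G s t p /\ forall q, walk G s t q -> pweight w s p <= pweight w s q.

Definition unique_shortest_paths (G : graph) (w : edge -> R) : Prop :=
  forall s t p q, shortest G w s t p -> shortest G w s t q -> p = q.

Definition bottleneck (cap : edge -> R) (s : 'I_n) (p : seq 'I_n) (e : edge) : Prop :=
  e \in pedges s p /\ forall e', e' \in pedges s p -> e' != e -> cap e < cap e'.

Definition reveals (G : graph) (w cap : edge -> R) (S : {set 'I_n}) (e : edge) : Prop :=
  exists s t p, [/\ s \in S, t != s, shortest G w s t p & bottleneck cap s p e].

Definition revealed (G : graph) (w cap : edge -> R) (S : {set 'I_n}) : {set edge} :=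
  [set e | `[< reveals G w cap S e >] ].

Definition valid_instance (G : graph) (w cap : edge -> R) : Prop :=
  [/\ forall e, e \in G -> #|e| = 2,
      forall e, e \in G -> 0 < w e,
      unique_shortest_paths G w,
      forall e, e \in G -> 0 < cap e
    & {in G &, injective cap}].

Definition OPT (G : graph) (w cap : edge -> R) (k : nat) : nat :=
  \max_(S : {set 'I_n} | (#|S| <= k)%N) #|revealed G w cap S|.

(* what the algorithm learns when selecting s: the revealed edges and their capacities *)
Definition observation := edge -> option R.
Definition observe (G : graph) (w cap : edge -> R) (s : 'I_n) : observation :=
  fun e => if e \in revealed G w cap [set s] then Some (cap e) else None.

Definition history := seq ('I_n * observation).

(* a deterministic adaptive algorithm: knows G and w; given the history of
   selections and observations, selects the next vantage point or stops (None) *)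
Definition algorithm := graph -> (edge -> R) -> history -> option 'I_n.

(* run with at most [fuel] selections; Some h iff the algorithm stops with history h *)
Fixpoint run (nxt : history -> option 'I_n) (obs : 'I_n -> observation)
    (fuel : nat) (h : history) : option history :=
  match nxt h with
  | None => Some h
  | Some v => match fuel with
              | 0 => None
              | fuel'.+1 => run nxt obs fuel' (rcons h (v, obs v))
              end
  end.

Definition selected (h : history) : {set 'I_n} := [set v in [seq x.1 | x <- h]].

Definition instance_optimal (k : nat) (alpha beta : R) (A : algorithm) : Prop :=
  forall (G : graph) (w cap : edge -> R), valid_instance G w cap ->
    exists (m : nat) (h : history),
      [/\ m%:R <= alpha * k%:R,
          run (A G w) (observe G w cap) m [::] = Some h
        & (OPT G w cap k)%:R <= beta * (#|revealed G w cap (selected h)|)%:R].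

End Vantage.

From HB Require Import structures.
From mathcomp Require Import all_boot all_order all_algebra.
From mathcomp Require Import boolp reals.
From mathcomp Require Import zify ring lra.
Set Implicit Arguments. Unset Strict Implicit. Unset Printing Implicit Defensive.
Import Order.TTheory GRing.Theory Num.Theory.
Local Open Scope ring_scope.

(* The hard instance is the path 0 - 1 - ... - n-1 with unit weights, whose
   capacities an adversary fixes online.  When a vertex is selected, the edges it
   touches receive small capacities, increasing with the time of the first touch
   and along the path; all untouched edges keep large capacities, decreasing
   along the path.  A vantage point only sees bottlenecks no larger than its own
   edges, which are fixed once it is selected, so the online answers agree with
   the final capacities, and it reveals only edges incident to selected vertices:
   at most 2m edges after m <= alpha k selections.  Cutting the path into m + k
   windows of g = n / (m + k) vertices, at least k windows contain no selected
   vertex, and a vantage point at the left end of such a window reveals g - 1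
   edges, since capacities decrease along it.  Hence
   k (g - 1) <= OPT <= 2 beta m <= 2 alpha beta k, and
   n < (g + 1) (m + k) <= 8 alpha^2 beta k. *)

Section Revealing.
Variables (R : realType) (n : nat) (G : graph n) (w : edge n -> R).

Lemma adjC (u v : 'I_n) : adj G u v = adj G v u.
Proof. by rewrite /adj setUC. Qed.

Lemma pedges_cons (s x : 'I_n) p : pedges s (x :: p) = [set s; x] :: pedges x p.
Proof. by []. Qed.

Lemma mem_pedges_graph s p e : path (adj G) s p -> e \in pedges s p -> e \in G.
Proof.
elim: p s => [|x p IH] s //= /andP[sx px].
by rewrite pedges_cons in_cons => /orP[/eqP->|]; last exact: IH.
Qed.

Lemma reveals_vantage (c : edge n -> R) S e :
  reveals G w c S e -> exists2 s, s \in S & reveals G w c [set s] e.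
Proof.
case=> s [t [p [sS ts sh bn]]]; exists s => //.
by exists s, t, p; split; rewrite ?inE.
Qed.

(* The bottleneck of a walk from [v] is at most the capacity of its first edge. *)
Lemma reveals1_le_incident (c : edge n -> R) v e :
  reveals G w c [set v] e ->
  e \in G /\ exists2 f, f \in G & v \in f /\ c e <= c f.
Proof.
case=> s [t [p [+ ts [/andP[pth /eqP lt] _] [ep bn]]]].
rewrite inE => /eqP sv; subst s.
split; first exact: mem_pedges_graph pth ep.
case: p pth lt ep bn => [|x p] /=; first by move=> _ lt; rewrite lt eqxx in ts.
move=> /andP[vx _] _ ep bn; exists [set v; x] => //.
split; first by rewrite !inE eqxx.
have [->//|ne] := eqVneq [set v; x] e.
by apply/ltW/bn; rewrite ?pedges_cons ?mem_head.
Qed.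

Lemma reveals1_transfer (c1 c2 : edge n -> R) (M : R) v e :
  (forall e, e \in G -> c1 e = c2 e \/ M < c1 e /\ M < c2 e) ->
  (forall f, f \in G -> v \in f -> c1 f <= M) ->
  reveals G w c1 [set v] e -> reveals G w c2 [set v] e /\ c1 e = c2 e.
Proof.
move=> agree low r.
have [eG [f fG [vf cef]]] := reveals1_le_incident r.
have c1e : c1 e <= M by apply: le_trans cef (low f fG vf).
have ceq : c1 e = c2 e.
  by case: (agree e eG) => // -[] /lt_le_trans/(_ c1e); rewrite ltxx.
split=> //; case: r => [s [t [p [sS ts sh [ep bn]]]]].
exists s, t, p; split=> //; split=> // e' e'p ne.
have e'G : e' \in G by case: sh => /andP[pth _] _; apply: mem_pedges_graph pth e'p.
rewrite -ceq; case: (agree e' e'G) => [<-|[_ /(le_lt_trans c1e)//]].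
exact: bn.
Qed.

Lemma observe_eq_below (c1 c2 : edge n -> R) (M : R) v :
  (forall e, e \in G -> c1 e = c2 e \/ M < c1 e /\ M < c2 e) ->
  (forall f, f \in G -> v \in f -> c1 f <= M) ->
  observe G w c1 v = observe G w c2 v.
Proof.
move=> agree low.
have agree' e : e \in G -> c2 e = c1 e \/ M < c2 e /\ M < c1 e.
  by move=> eG; case: (agree e eG) => [->|[]]; [left|right].
have low' f : f \in G -> v \in f -> c2 f <= M.
  move=> fG vf; have := low f fG vf.
  by case: (agree f fG) => [<-//|[/lt_le_trans h _ /h]]; rewrite ltxx.
apply: funext => e; rewrite /observe /revealed !inE.
case: (asboolP (reveals G w c1 [set v] e)) => r1.
  by have [r2 ->] := reveals1_transfer agree low r1; case: asboolP.
case: asboolP => // r2.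
by have [] := reveals1_transfer agree' low' r2.
Qed.

Definition unit_weight : edge n -> R := fun=> 1.

Lemma pweight_unit s p : pweight unit_weight s p = (size p)%:R.
Proof.
elim: p s => [|x p IH] s; first by rewrite /pweight big_nil.
by rewrite /pweight pedges_cons big_cons -/(pweight _ x p) IH -natr1 addrC.
Qed.

Lemma shortest_unitP s t p :
  shortest G unit_weight s t p <->
  walk G s t p /\ forall q, walk G s t q -> (size p <= size q)%N.
Proof.
rewrite /shortest; split=> -[wp h]; split=> // q wq; have := h q wq;
  by rewrite !pweight_unit ler_nat.
Qed.

End Revealing.

Section PathGraph.
Variable n' : nat.
Local Notation n := n'.+1.

Definition edge_at (a : nat) : edge n := [set inord a; inord a.+1].
Definition path_graph : graph n := [set edge_at a | a : 'I_n'].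

Lemma mem_edge_at (a : nat) (u : 'I_n) :
  (a < n')%N -> (u \in edge_at a) = (u == a :> nat) || (u == a.+1 :> nat).
Proof.
move=> an; rewrite !inE; congr orb; apply/eqP/eqP => [->|<-];
  by rewrite ?inordK ?inord_val //; lia.
Qed.

Lemma edge_at_inj (a b : nat) : (a < n')%N -> (b < n')%N -> edge_at a = edge_at b -> a = b.
Proof.
move=> an bn e.
have : (inord a : 'I_n) \in edge_at b by rewrite -e !inE eqxx.
have : (inord a.+1 : 'I_n) \in edge_at b by rewrite -e !inE eqxx orbT.
by rewrite !mem_edge_at // !inordK; lia.
Qed.

Lemma adj_path_graph (u v : 'I_n) : adj path_graph u v -> `|u - v|%N = 1%N.
Proof.
case/imsetP=> a _ e; have ha := ltn_ord a.
have : u \in edge_at a by rewrite -e !inE eqxx.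
have : v \in edge_at a by rewrite -e !inE eqxx orbT.
have : (inord a : 'I_n) \in [set u; v] by rewrite e !inE eqxx.
have : (inord a.+1 : 'I_n) \in [set u; v] by rewrite e !inE eqxx orbT.
by rewrite !mem_edge_at // !inE -!(inj_eq val_inj) /= !inordK //; lia.
Qed.

Lemma adj_path_graph_succ (u v : 'I_n) : v = u.+1 :> nat -> adj path_graph u v.
Proof.
move=> vu; have un : (u < n')%N by have := ltn_ord v; lia.
apply/imsetP; exists (Ordinal un) => //=.
by rewrite /edge_at inord_val; congr [set _; _]; apply: val_inj; rewrite /= inordK; lia.
Qed.

Lemma dist_le_size_walk (s : 'I_n) p :
  path (adj path_graph) s p -> (`|s - last s p| <= size p)%N.
Proof.
elim: p s => [|x p IH] s /=; first by lia.
by case/andP=> /adj_path_graph sx /IH; lia.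
Qed.

Lemma walk_dist_uniq (s : 'I_n) p q :
  path (adj path_graph) s p -> path (adj path_graph) s q ->
  last s p = last s q -> size p = size q -> size p = `|s - last s p|%N -> p = q.
Proof.
elim: p s q => [|x p IH] s [|y q] //= /andP[sx px] /andP[sy qy] el [sz] d.
have dx := dist_le_size_walk px; have dy := dist_le_size_walk qy.
have ax := adj_path_graph sx; have ay := adj_path_graph sy.
rewrite el in d dx.
have xy : x = y by apply: ord_inj; lia.
by subst y; congr (_ :: _); apply: (IH x); rewrite ?el //; lia.
Qed.

Fixpoint ascent (s d : nat) : seq 'I_n :=
  if d is d'.+1 then inord s.+1 :: ascent s.+1 d' else [::].
Fixpoint descent (s d : nat) : seq 'I_n :=
  if d is d'.+1 then inord s.-1 :: descent s.-1 d' else [::].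

Lemma size_ascent s d : size (ascent s d) = d.
Proof. by elim: d s => //= d IH s; rewrite IH. Qed.

Lemma size_descent s d : size (descent s d) = d.
Proof. by elim: d s => //= d IH s; rewrite IH. Qed.

Lemma last_ascent s d : last (inord s) (ascent s d) = inord (s + d).
Proof. by elim: d s => [|d IH] s /=; rewrite ?addn0 // IH addSnnS. Qed.

Lemma last_descent s d : last (inord s) (descent s d) = inord (s - d).
Proof. by elim: d s => [|d IH] s /=; rewrite ?subn0 // IH; congr inord; lia. Qed.

Lemma path_ascent s d : (s + d < n)%N -> path (adj path_graph) (inord s) (ascent s d).
Proof.
elim: d s => [|d IH] s //= h; rewrite IH 1?adj_path_graph_succ //; last lia.
by rewrite !inordK; lia.
Qed.

Lemma path_descent s d : (d <= s < n)%N -> path (adj path_graph) (inord s) (descent s d).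
Proof.
elim: d s => [|d IH] s //= h; rewrite IH 1?adjC 1?adj_path_graph_succ //; last lia.
by rewrite !inordK; lia.
Qed.

Lemma pedges_ascent s d : pedges (inord s) (ascent s d) = map edge_at (iota s d).
Proof. by elim: d s => [|d IH] s //=; rewrite pedges_cons IH. Qed.

Lemma exists_walk_dist (s t : 'I_n) : exists2 p, walk path_graph s t p & size p = `|s - t|%N.
Proof.
have hs := ltn_ord s; have ht := ltn_ord t.
rewrite /walk -[in path _ s](inord_val s) -[in last s](inord_val s).
have [st|ts] := leqP s t.
  exists (ascent s (t - s)); last by rewrite size_ascent; lia.
  rewrite path_ascent ?last_ascent /=; last lia.
  by apply/eqP/val_inj; rewrite /= inordK; lia.
exists (descent s (s - t)); last by rewrite size_descent; lia.
rewrite path_descent ?last_descent /=; last lia.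
by apply/eqP/val_inj; rewrite /= inordK; lia.
Qed.

Section UnitWeight.
Variable R : realType.

Lemma size_shortest_path_graph (s t : 'I_n) p :
  shortest path_graph (@unit_weight R n) s t p -> size p = `|s - t|%N.
Proof.
case/shortest_unitP => /andP[pth /eqP lt] min; have [q wq qd] := exists_walk_dist s t.
by have := min q wq; have := dist_le_size_walk pth; rewrite lt; lia.
Qed.

Lemma unique_shortest_path_graph : unique_shortest_paths path_graph (@unit_weight R n).
Proof.
move=> s t p q sp sq.
have ep := size_shortest_path_graph sp; have eq := size_shortest_path_graph sq.
case: sp => /andP[pp /eqP lp] _; case: sq => /andP[pq /eqP lq] _.
by apply: (walk_dist_uniq pp pq); rewrite ?lp ?lq //; lia.
Qed.

End UnitWeight.

End PathGraph.

Section AdversaryCapacity.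
Variables (R : realType) (n' : nat).
Local Notation n := n'.+1.
Local Notation edge_at := (@edge_at n').
Local Notation path_graph := (path_graph n').
Local Notation w1 := (@unit_weight R n).

Definition first_touch (L : seq 'I_n) (a : nat) : nat :=
  minn (index (inord a) L) (index (inord a.+1) L).

(* Edges touched by [L] get capacities below [size L * n], ordered by time of
   first touch and then increasing along the path; untouched edges get
   capacities above [size L * n], decreasing along the path. *)
Definition adv_capn (L : seq 'I_n) (a : nat) : nat :=
  if (first_touch L a < size L)%N then (first_touch L a * n + a + 1)%N
  else ((size L + 2) * n - a)%N.

Definition adv_cap (L : seq 'I_n) (e : edge n) : R :=
  if [pick a : 'I_n' | edge_at a == e] is Some a then (adv_capn L a)%:R else 1.

Lemma adv_cap_edge_at L (a : nat) : (a < n')%N -> adv_cap L (edge_at a) = (adv_capn L a)%:R.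
Proof.
move=> an; rewrite /adv_cap; case: pickP => [b /eqP|/(_ (Ordinal an))]; last by rewrite eqxx.
by move/edge_at_inj => -> //; apply: ltn_ord.
Qed.

Lemma first_touch_cat L s a :
  first_touch (L ++ s) a =
  if (first_touch L a < size L)%N then first_touch L a else (size L + first_touch s a)%N.
Proof.
rewrite /first_touch !index_cat.
have idx (x : 'I_n) : if x \in L then (index x L < size L)%N else index x L == size L.
  by case: ifPn => [|/memNindex ->]; rewrite ?index_mem.
have := idx (inord a); have := idx (inord a.+1).
by case: (inord a \in L); case: (inord a.+1 \in L) => /= hb ha; case: ltnP; lia.
Qed.

Lemma first_touch_lt_size L a :
  (first_touch L a < size L)%N = ((inord a : 'I_n) \in L) || ((inord a.+1 : 'I_n) \in L).
Proof. by rewrite /first_touch gtn_min !index_mem. Qed.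

Lemma adv_capn_untouched L a :
  (inord a : 'I_n) \notin L -> (inord a.+1 : 'I_n) \notin L -> adv_capn L a = ((size L + 2) * n - a)%N.
Proof. by move=> ha hb; rewrite /adv_capn first_touch_lt_size (negbTE ha) (negbTE hb). Qed.

Lemma adv_capn_lt_touched L a :
  (a < n')%N -> (adv_capn L a < size L * n)%N = (first_touch L a < size L)%N.
Proof.
move=> an; rewrite /adv_capn; case: ifP => touched.
  have : ((first_touch L a).+1 * n <= size L * n)%N by rewrite leq_mul2r touched orbT.
  by rewrite mulSn; lia.
by apply/negbTE; rewrite -leqNgt mulnDl; lia.
Qed.

Lemma adv_capn_gt0 L a : (a < n')%N -> (0 < adv_capn L a)%N.
Proof. by move=> an; rewrite /adv_capn; case: ifP; rewrite ?mulnDl; lia. Qed.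

Lemma adv_capn_inj L a b : (a < n')%N -> (b < n')%N -> adv_capn L a = adv_capn L b -> a = b.
Proof.
move=> an bn; have := adv_capn_lt_touched L an; have := adv_capn_lt_touched L bn.
rewrite /adv_capn; case: ifP => ha; case: ifP => hb; last by rewrite mulnDl; lia.
2,3: by move=> + + e; rewrite e => ->.
by move=> _ _ /(congr1 (modn^~ n)); rewrite -!addnA !modnMDl !modn_small; lia.
Qed.

Lemma adv_instance_valid L : valid_instance path_graph w1 (adv_cap L).
Proof.
have mem_graph e : e \in path_graph -> exists2 a : 'I_n', e = edge_at a & (a < n')%N.
  by case/imsetP=> a _ ->; exists a.
split.
- move=> _ /mem_graph[a -> an]; rewrite cards2; case: eqP => // /(congr1 val).
  by rewrite /= !inordK; lia.
- by move=> e _; rewrite ltr01.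
- exact: unique_shortest_path_graph.
- by move=> _ /mem_graph[a -> an]; rewrite adv_cap_edge_at // ltr0n adv_capn_gt0.
- move=> _ _ /mem_graph[a -> an] /mem_graph[b -> bn].
  by rewrite !adv_cap_edge_at // => /eqP; rewrite eqr_nat => /eqP/adv_capn_inj ->.
Qed.

Lemma adv_cap_incident_lt (L : seq 'I_n) (v : 'I_n) f :
  v \in L -> f \in path_graph -> v \in f -> adv_cap L f < (size L * n)%:R.
Proof.
move=> vL /imsetP[a _ ->]; have an := ltn_ord a.
rewrite mem_edge_at // adv_cap_edge_at // ltr_nat adv_capn_lt_touched // => va.
by rewrite first_touch_lt_size; case/orP: va => /eqP <-; rewrite inord_val vL ?orbT.
Qed.

(* Selecting more vertices only changes capacities above [size L * n]. *)
Lemma observe_adv_cap_cat (L s : seq 'I_n) v :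
  v \in L -> observe path_graph w1 (adv_cap (L ++ s)) v = observe path_graph w1 (adv_cap L) v.
Proof.
move=> vL; symmetry; apply: (@observe_eq_below _ _ _ _ _ _ (size L * n)%:R).
  move=> _ /imsetP[a _ ->]; have an := ltn_ord a; rewrite !adv_cap_edge_at //.
  rewrite /adv_capn first_touch_cat size_cat !ltr_nat.
  case: ltnP => touched; first by left; rewrite ltn_addr.
  right; rewrite mulnDl; split; first lia.
  by case: ifP; rewrite !mulnDl; lia.
by move=> f fG vf; apply/ltW/(adv_cap_incident_lt vL fG vf).
Qed.

End AdversaryCapacity.

Section Adversary.
Variables (R : realType) (n' : nat).
Local Notation n := n'.+1.
Local Notation path_graph := (path_graph n').
Local Notation w1 := (@unit_weight R n).
Local Notation adv_cap := (@adv_cap R n').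
Variable A : algorithm R n.
Local Notation nxt := (A path_graph w1).

Definition adv_observe (h : history R n) (v : 'I_n) : observation R n :=
  observe path_graph w1 (adv_cap (rcons (map fst h) v)) v.

Fixpoint adv_history (i : nat) : history R n :=
  if i is i'.+1 then
    let h := adv_history i' in
    if nxt h is Some v then rcons h (v, adv_observe h v) else h
  else [::].

Lemma adv_history_prefix i j : (i <= j)%N -> exists s, adv_history j = adv_history i ++ s.
Proof.
elim: j => [|j IH]; first by rewrite leqn0 => /eqP->; exists [::]; rewrite cats0.
rewrite leq_eqVlt => /orP[/eqP->|]; first by exists [::]; rewrite cats0.
rewrite ltnS => /IH[s e] /=; rewrite e.
case: (nxt (adv_history i ++ s)) => [v|]; last by exists s.
by exists (rcons s (v, adv_observe (adv_history i ++ s) v)); rewrite rcons_cat.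
Qed.

Lemma size_adv_history i : (size (adv_history i) <= i)%N.
Proof. by elim: i => //= i IH; case: nxt => [v|]; rewrite ?size_rcons; lia. Qed.

Lemma adv_history_stop i j :
  nxt (adv_history i) = None -> (i <= j)%N -> adv_history j = adv_history i.
Proof.
move=> stop; elim: j => [|j IH]; first by rewrite leqn0 => /eqP->.
by rewrite leq_eqVlt => /orP[/eqP->//|]; rewrite ltnS => /IH /= ->; rewrite stop.
Qed.

(* Observations made against the final capacities coincide with those the
   adversary gave online. *)
Lemma run_adv_history T F j h : (j + F <= T)%N ->
  run nxt (observe path_graph w1 (adv_cap (map fst (adv_history T)))) F (adv_history j) = Some h ->
  exists2 j', (j' <= j + F)%N & h = adv_history j' /\ nxt h = None.
Proof.
elim: F j => [|F IH] j jT /=.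
  by case E: nxt => [v|] // [<-]; exists j; rewrite ?addn0.
case E: nxt => [v|]; last by move=> [<-]; exists j => //; apply: leq_addr.
have step : adv_history j.+1 = rcons (adv_history j) (v, adv_observe (adv_history j) v).
  by rewrite /= E.
have [|s es] := @adv_history_prefix j.+1 T; first lia.
have final : observe path_graph w1 (adv_cap (map fst (adv_history T))) v
           = adv_observe (adv_history j) v.
  rewrite es map_cat step map_rcons; apply: observe_adv_cap_cat.
  by rewrite mem_rcons mem_head.
by rewrite final -step => /IH[|j' ? ?]; [lia | exists j' => //; lia].
Qed.

Lemma run_adversary T m h : (m <= T)%N ->
  run nxt (observe path_graph w1 (adv_cap (map fst (adv_history T)))) m [::] = Some h ->
  h = adv_history T /\ (size h <= m)%N.
Proof.
move=> mT /(run_adv_history (j := 0) mT)[j jm [-> stop]].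
rewrite (adv_history_stop stop (leq_trans jm mT)); split=> //.
exact: leq_trans (size_adv_history j) jm.
Qed.

End Adversary.

Lemma exists_subset_card (T : finType) (A : {set T}) k :
  (k <= #|A|)%N -> exists2 B : {set T}, B \subset A & #|B| = k.
Proof.
move=> kA; have uniq_take : uniq (take k (enum A)) by rewrite take_uniq ?enum_uniq.
exists [set x in take k (enum A)].
  by apply/subsetP => x; rewrite inE => /mem_take; rewrite mem_enum.
by rewrite cardsE (card_uniqP uniq_take) size_takel // -cardE.
Qed.

Section Counting.
Variables (R : realType) (n' : nat).
Local Notation n := n'.+1.
Local Notation edge_at := (@edge_at n').
Local Notation path_graph := (path_graph n').
Local Notation w1 := (@unit_weight R n).
Local Notation adv_cap := (@adv_cap R n').

(* Against [adv_cap L], a vantage point only reveals edges touched by [L]. *)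
Lemma revealed_adv_cap_le (L : seq 'I_n) :
  (#|revealed path_graph w1 (adv_cap L) [set v in L]| <= 2 * size L)%N.
Proof.
pose incident (p : 'I_n * bool) := if p.2 then edge_at p.1 else edge_at p.1.-1.
have sub : revealed path_graph w1 (adv_cap L) [set v in L]
           \subset incident @: setX [set v in L] [set: bool].
  apply/subsetP => e; rewrite inE => /asboolP /reveals_vantage [s + r].
  rewrite inE => sL; have [/imsetP[a _ ->] [f fG [sf le_ef]]] := reveals1_le_incident r.
  have := le_lt_trans le_ef (adv_cap_incident_lt R sL fG sf).
  have an := ltn_ord a; rewrite adv_cap_edge_at // ltr_nat adv_capn_lt_touched //.
  rewrite first_touch_lt_size => /orP[ha|hb].
    by apply/imsetP; exists (inord a, true); rewrite ?inE ?ha // /incident /= inordK //; lia.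
  by apply/imsetP; exists (inord a.+1, false); rewrite ?inE ?hb // /incident /= inordK //; lia.
apply: leq_trans (subset_leq_card sub) _; apply: leq_trans (leq_imset_card _ _) _.
by rewrite cardsX cardsT card_bool mulnC leq_mul2l cardsE card_size.
Qed.

(* Along a run of untouched vertices the capacities decrease, so the run's last
   edge is the bottleneck of the walk from its first vertex. *)
Lemma revealed_untouched_run (L : seq 'I_n) (S : {set 'I_n}) (x i : nat) :
  (inord x : 'I_n) \in S -> (x + i.+1 < n)%N ->
  (forall y, (x <= y <= x + i.+1)%N -> (inord y : 'I_n) \notin L) ->
  edge_at (x + i) \in revealed path_graph w1 (adv_cap L) S.
Proof.
move=> xS xn free; rewrite inE; apply/asboolP.
exists (inord x), (inord (x + i.+1)), (ascent n' x i.+1); split=> //.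
- by apply/eqP => /(congr1 val); rewrite /= !inordK; lia.
- apply/shortest_unitP; split; first by rewrite /walk path_ascent // last_ascent eqxx.
  move=> q /andP[pq /eqP lq]; have := dist_le_size_walk pq.
  by rewrite lq size_ascent !inordK; lia.
rewrite /bottleneck pedges_ascent; split; first by apply: map_f; rewrite mem_iota; lia.
move=> e' /mapP[b]; rewrite mem_iota => hb -> ne.
have bi : (b < x + i)%N.
  by case: ltngtP ne => // [|->]; [lia | rewrite eqxx].
rewrite !adv_cap_edge_at ?ltr_nat; try lia.
by rewrite !adv_capn_untouched ?free ?addnS ?mulnDl //; lia.
Qed.

Lemma exists_free_windows (L : seq 'I_n) (m k g : nat) : (size L <= m)%N ->
  exists2 F : {set 'I_(m + k)}, #|F| = k & forall j x, j \in F -> x \in L -> (x %/ g)%N != j.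
Proof.
move=> Lm; pose hit := [set j : 'I_(m + k) in pmap (fun x : 'I_n => insub (x %/ g)%N) L].
have card_hit : (#|hit| <= size L)%N.
  by rewrite cardsE (leq_trans (card_size _)) // size_pmap count_size.
have [|F Fhit cardF] := @exists_subset_card _ (~: hit) k.
  by rewrite cardsCs setCK card_ord; lia.
exists F => // j x jF xL; apply: contraTneq (subsetP Fhit j jF) => xj.
by rewrite !inE negbK mem_pmap; apply/mapP; exists x; rewrite // xj valK.
Qed.

Lemma revealed_free_windows (L : seq 'I_n) (W g : nat) (F : {set 'I_W}) :
  (W * g <= n)%N -> (forall j x, j \in F -> x \in L -> (x %/ g)%N != j) ->
  (#|F| * (g - 1) <= #|revealed path_graph w1 (adv_cap L) [set inord (j * g) | j : 'I_W in F]|)%N.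
Proof.
move=> Wg free.
have in_window (j : 'I_W) r : (r < g)%N -> (j * g + r < n)%N.
  move=> rg; have : (j.+1 * g <= W * g)%N by rewrite leq_mul2r ltn_ord orbT.
  by rewrite mulSn; lia.
pose E := [set edge_at (p.1 * g + p.2) | p : 'I_W * 'I_g.-1 in setX F [set: 'I_g.-1]].
have card_E : #|E| = (#|F| * (g - 1))%N.
  rewrite card_in_imset; first by rewrite cardsX cardsT card_ord subn1.
  move=> [j1 i1] [j2 i2] _ _ /= e.
  have := ltn_ord i1; have := ltn_ord i2; move=> i2g i1g; have g0 : (0 < g)%N by lia.
  have {}e : (j1 * g + i1 = j2 * g + i2)%N.
    by apply: edge_at_inj e; [have := in_window j1 i1.+1 | have := in_window j2 i2.+1]; lia.
  congr pair; apply: val_inj => /=.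
    by have := congr1 (divn^~ g) e; rewrite /= !divnMDl // !divn_small ?addn0 //; lia.
  by have := congr1 (modn^~ g) e; rewrite /= !modnMDl !modn_small //; lia.
rewrite -card_E; apply/subset_leq_card/subsetP => _ /imsetP[[j i] /setXP[jF _] ->] /=.
have ig := ltn_ord i; have g0 : (0 < g)%N by lia.
apply: revealed_untouched_run; first by apply/imsetP; exists j.
  by apply: in_window; lia.
move=> y /andP[lo hi]; apply/negP => /(free j _ jF); apply/negP/negPn.
have -> : y = (j * g + (y - j * g))%N by lia.
by rewrite inordK ?divnMDl ?divn_small ?addn0 //; [lia | apply: in_window; lia].
Qed.

Lemma OPT_adv_cap_ge (L : seq 'I_n) (m k : nat) : (size L <= m)%N ->
  (k * (n %/ (m + k) - 1) <= OPT path_graph w1 (adv_cap L) k)%N.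
Proof.
move=> Lm; set g := (n %/ (m + k))%N.
have [F cardF free] := exists_free_windows k g Lm.
have Wg : ((m + k) * g <= n)%N by rewrite mulnC leq_divM.
rewrite -cardF; apply: leq_trans (revealed_free_windows Wg free) _.
apply: (leq_bigmax_cond (F := fun S => #|revealed path_graph w1 (adv_cap L) S|)).
by rewrite (leq_trans (leq_imset_card _ _)) ?cardF.
Qed.

End Counting.

Lemma window_count_arith (R : realFieldType) (n k m g : nat) (alpha beta : R) :
  (0 < k)%N -> 1 <= alpha -> 1 <= beta -> m%:R <= alpha * k%:R ->
  (k * (g - 1))%:R <= beta * (2 * m)%:R -> (n < g.+1 * (m + k))%N ->
  n%:R <= 8 * (alpha ^+ 2 * beta * k%:R).
Proof.
move=> k0 a1 b1 mk windows nW.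
have k1 : 1 <= k%:R :> R by rewrite ler1n.
have m0 : 0 <= m%:R :> R by [].
have g0 : 0 <= (g - 1)%:R :> R by [].
have g_le : (g - 1)%:R <= 2 * alpha * beta.
  rewrite -(ler_pM2l (_ : 0 < k%:R)) ?ltr0n //; rewrite !natrM in windows.
  by have := ler_wpM2l (le_trans ler01 b1) mk; nra.
have n_le : n%:R <= ((g - 1)%:R + 2) * (m%:R + k%:R) :> R.
  by rewrite -natrD -natrD -natrM ler_nat; apply: leq_trans (ltnW nW) _; rewrite leq_mul2r; lia.
apply: le_trans n_le _.
have -> : 8 * (alpha ^+ 2 * beta * k%:R) = (4 * alpha * beta) * (2 * alpha * k%:R) by ring.
by apply: ler_pM; nra.
Qed.

Theorem mainTheorem5 :
  exists c : rat, 0 < c /\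
    forall (R : realType) (n k : nat) (alpha beta : R) (A : algorithm R n),
      (0 < k)%N -> 1 <= alpha -> 1 <= beta ->
      instance_optimal k alpha beta A ->
      ratr c * (n%:R / k%:R) <= alpha ^+ 2 * beta.
Proof.
exists (8%:R)^-1; split; first by rewrite invr_gt0 ltr0n.
move=> R n k alpha beta A k0 a1 b1 opt.
rewrite fmorphV rmorph_nat mulrA ler_pdivrMr ?ltr0n // ler_pdivrMl ?ltr0n //.
case: n A opt => [|n'] A opt; first by rewrite !mulr_ge0 // (le_trans ler01).
pose T := Num.bound (alpha * k%:R).
pose L := map fst (adv_history A T).
have [m [h [mk run_h opt_h]]] := opt _ _ _ (adv_instance_valid R L).
have mT : (m <= T)%N.
  by rewrite -(ler_nat R) ltW // (le_lt_trans mk) // archi_boundP // mulr_ge0 // (le_trans ler01).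
have [hT hm] := run_adversary mT run_h.
have Lm : (size L <= m)%N by rewrite size_map -hT.
apply: (window_count_arith (g := n'.+1 %/ (m + k)) k0 a1 b1 mk); last first.
  by rewrite ltn_ceil // addn_gt0 k0 orbT.
apply: le_trans (_ : (OPT (path_graph n') (@unit_weight R _) (adv_cap R L) k)%:R <= _).
  by rewrite ler_nat OPT_adv_cap_ge.
apply: le_trans opt_h _; rewrite ler_wpM2l ?(le_trans ler01) // ler_nat.
by rewrite /selected hT (leq_trans (revealed_adv_cap_le R L)) // leq_mul2l Lm orbT.
Qed.
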